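(* Let $L$ be an ultraparacompact locale with $\bot\neq\top$, $B$ its Boolean algebra of complemented opens, $\mathcal{J}$ the set of partitions of $L$, and $F$ a $B_{\mathcal{J}}$-set. For each $x\in|F|$ the function $\hat x:=\lambda y.\bigvee\{b\in B: x\equiv_b y\}$ is an open of the étale space $E(F)$, and the assignment $x\mapsto\hat x$ is injective. Moreover every $w\in\mathcal{O}(E(F))$ satisfies $w=\bigvee_{x\in|F|}\hat x\wedge\mathrm{const}_{w(x)}$.
   Context: Partitions of $L$: pairwise disjoint sets of opens, not containing $\bot$, with join $\top$ (their members are complemented). $L$ ultraparacompact: every open is a join of complemented opens, and every cover is refined by a partition. A $B_{\mathcal{J}}$-set $F$ is a set $|F|$ with binary operations $b(-,-)$ ($b\in B$) satisfying $b(x,x)=x$, $b(b(x,y),z)=b(x,z)$, $b(x,b(y,z))=b(x,z)$, $\top(x,y)=x$, $(\neg b)(x,y)=b(y,x)$, $(b\wedge c)(x,y)=b(c(x,y),y)$, and $P$-ary operations $P(-)$ for $P\in\mathcal{J}$ satisfying $P(\lambda b.z)=z$, $P(\lambda b.b(x_b,y_b))=P(\lambda b.x_b)$, $b(P(x),x_b)=x_b$ ($b\in P$). For $b\in B$, $x\equiv_by$ iff $b(x,y)=y$. $\mathcal{O}(L)$ is a $B_{\mathcal{J}}$-set via $b(u,v)=(b\wedge u)\vee(\neg b\wedge v)$, $P(\lambda b.u_b)=\bigvee_{b\in P}(b\wedge u_b)$. The étale space $E(F)$ is the locale whose frame $\mathcal{O}(E(F))$ is the set of $B_{\mathcal{J}}$-set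 homomorphisms $F\to\mathcal{O}(L)$, ordered pointwise (meets and joins computed pointwise); $\mathrm{const}_u$ denotes the constant function with value $u$. *)

Set Implicit Arguments.

Record Frame := {
  car :> Type;
  le : car -> car -> Prop;
  join : (car -> Prop) -> car;
  meet : car -> car -> car;
  top : car;
  bot : car;
  le_refl : forall u, le u u;
  le_trans : forall u v w, le u v -> le v w -> le u w;
  le_antisym : forall u v, le u v -> le v u -> u = v;
  join_ub : forall (S : car -> Prop) s, S s -> le s (join S);
  join_least : forall (S : car -> Prop) u, (forall s, S s -> le s u) -> le (join S) u;
  meet_lb1 : forall u v, le (meet u v) u;
  meet_lb2 : forall u v, le (meet u v) v;
  meet_glb : forall u v w, le w u -> le w v -> le w (meet u v);
  top_max : forall u, le u top;
  bot_min : forall u, le bot u;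
  meet_join_distr : forall u (S : car -> Prop),
    meet u (join S) = join (fun w => exists s, S s /\ w = meet u s)
}.

Arguments le {L} : rename.
Arguments join {L} : rename.
Arguments meet {L} : rename.
Arguments top {L} : rename.
Arguments bot {L} : rename.

Definition join2 {L : Frame} (u v : L) : L := join (fun w => w = u \/ w = v).

Definition complemented {L : Frame} (u : L) : Prop :=
  exists v, meet u v = bot /\ join2 u v = top.

(* the (pseudo)complement; for complemented u it is the complement of u *)
Definition compl {L : Frame} (u : L) : L := join (fun v => meet u v = bot).

Definition B (L : Frame) := { u : L | complemented u }.

Definition partition {L : Frame} (P : B L -> Prop) : Prop :=
  (forall b c, P b -> P c -> b <> c -> meet (proj1_sig b) (proj1_sig c) = bot) /\
  (forall b, P b -> proj1_sig b <> bot) /\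
  join (fun u => exists b, P b /\ proj1_sig b = u) = top.

Definition ultraparacompact (L : Frame) : Prop :=
  (forall u : L, exists S : L -> Prop,
      (forall s, S s -> complemented s) /\ u = join S) /\
  (forall C : L -> Prop, join C = top ->
      exists P : B L -> Prop, partition P /\
        forall b, P b -> exists c, C c /\ le (proj1_sig b) c).

Record BJset (L : Frame) := {
  bcar :> Type;
  bop : B L -> bcar -> bcar -> bcar;
  pop : forall P : B L -> Prop, ({ b | P b } -> bcar) -> bcar; (* P(-), meaningful for P in J *)
  bop_idem : forall b x, bop b x x = x;
  bop_left : forall b x y z, bop b (bop b x y) z = bop b x z;
  bop_right : forall b x y z, bop b x (bop b y z) = bop b x z;
  bop_top : forall (t : B L) x y, proj1_sig t = top -> bop t x y = x;
  bop_neg : forall (b c : B L) x y,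
      proj1_sig c = compl (proj1_sig b) -> bop c x y = bop b y x;
  bop_meet : forall (b c d : B L) x y,
      proj1_sig d = meet (proj1_sig b) (proj1_sig c) ->
      bop d x y = bop b (bop c x y) y;
  pop_const : forall P, partition P -> forall z, pop P (fun _ => z) = z;
  pop_bop : forall P, partition P -> forall xs ys : { b | P b } -> bcar,
      pop P (fun i => bop (proj1_sig i) (xs i) (ys i)) = pop P xs;
  pop_proj : forall P, partition P -> forall (xs : { b | P b } -> bcar) i,
      bop (proj1_sig i) (pop P xs) (xs i) = xs i
}.

Arguments bop {L} F : rename.
Arguments pop {L} F : rename.

Definition equivb {L : Frame} (F : BJset L) (b : B L) (x y : F) : Prop :=
  bop F b x y = y.

(* B_J-set homomorphisms F -> O(L), O(L) with
   b(u,v) = (b /\ u) \/ (~b /\ v),  P(lambda b. u_b) = \/_{b in P} (b /\ u_b).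
   These are the opens of the etale space E(F). *)
Definition is_open_E {L : Frame} (F : BJset L) (h : F -> L) : Prop :=
  (forall b x y, h (bop F b x y) =
     join2 (meet (proj1_sig b) (h x)) (meet (compl (proj1_sig b)) (h y))) /\
  (forall P, partition P -> forall xs : { b | P b } -> F,
     h (pop F P xs) =
     join (fun u => exists i : { b | P b }, u = meet (proj1_sig (proj1_sig i)) (h (xs i)))).

Definition xhat {L : Frame} (F : BJset L) (x : F) : F -> L :=
  fun y => join (fun u => exists b : B L, proj1_sig b = u /\ equivb F b x y).

(** The value x^(y) is the truth value of "x = y": the B_J-set axioms make
    each [equivb F b] an equivalence relation, antitone in [b], so x^ is a
    reflexive and transitive fuzzy equality (x^ x = top and
    x^ y /\ y^ z <= x^ z).  The two homomorphism equations for x^ follow by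
    splitting along b \/ ~b, resp. along a partition.  If x^ = x'^ then
    x ==_b x' on a cover of L; a refining partition has x ==_b x' on every
    block, and the partition axioms glue this to x = x'.  Finally, for an open
    w of E(F) and x ==_b y we get b /\ w x <= w (b(x,y)) = w y, which yields
    the decomposition of w. *)

From Stdlib Require Import FunctionalExtensionality Setoid.

Section FrameFacts.
Context {L : Frame}.
Implicit Types u v w : L.

Lemma meet_comm u v : meet u v = meet v u.
Proof. apply le_antisym; apply meet_glb; (apply meet_lb1 || apply meet_lb2). Qed.

Lemma meet_absorb_le u v : le u v -> meet u v = u.
Proof.
  intro Huv. apply le_antisym; [apply meet_lb1|].
  apply meet_glb; [apply le_refl | exact Huv].
Qed.

Lemma meet_top u : meet u top = u.
Proof. apply meet_absorb_le, top_max. Qed.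

Lemma meet_mono u u' v v' : le u u' -> le v v' -> le (meet u v) (meet u' v').
Proof.
  intros Hu Hv. apply meet_glb.
  - apply le_trans with u; [apply meet_lb1 | exact Hu].
  - apply le_trans with v; [apply meet_lb2 | exact Hv].
Qed.

Lemma le_bot_eq u : le u bot -> u = bot.
Proof. intro Hu. apply le_antisym; [exact Hu | apply bot_min]. Qed.

Lemma join2_ub_l u v : le u (join2 u v).
Proof. apply join_ub. auto. Qed.

Lemma join2_ub_r u v : le v (join2 u v).
Proof. apply join_ub. auto. Qed.

Lemma join2_least u v w : le u w -> le v w -> le (join2 u v) w.
Proof. intros Hu Hv. apply join_least. intros s [-> | ->]; assumption. Qed.

Lemma join2_mono u u' v v' : le u u' -> le v v' -> le (join2 u v) (join2 u' v').
Proof.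
  intros Hu Hv. apply join2_least.
  - apply le_trans with u'; [exact Hu | apply join2_ub_l].
  - apply le_trans with v'; [exact Hv | apply join2_ub_r].
Qed.

Lemma join2_comm u v : join2 u v = join2 v u.
Proof. apply le_antisym; apply join2_least; (apply join2_ub_l || apply join2_ub_r). Qed.

Lemma meet_join2_distr u v w : meet u (join2 v w) = join2 (meet u v) (meet u w).
Proof.
  unfold join2 at 1. rewrite meet_join_distr. apply le_antisym.
  - apply join_least. intros s [t [[-> | ->] ->]]; [apply join2_ub_l | apply join2_ub_r].
  - apply join2_least; apply join_ub; eauto.
Qed.

Lemma meet_compl_bot u : meet u (compl u) = bot.
Proof.
  unfold compl. rewrite meet_join_distr. apply le_bot_eq, join_least.
  intros s [t [Ht ->]]. rewrite Ht. apply le_refl.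
Qed.

Lemma join_compl_top u : complemented u -> join2 u (compl u) = top.
Proof.
  intros [v [Hmeet Hjoin]]. apply le_antisym; [apply top_max|].
  rewrite <- Hjoin. apply join2_mono; [apply le_refl|].
  apply join_ub. exact Hmeet.
Qed.

Lemma compl_complemented u : complemented u -> complemented (compl u).
Proof.
  intro Hu. exists u. split.
  - rewrite meet_comm. apply meet_compl_bot.
  - rewrite join2_comm. apply join_compl_top, Hu.
Qed.

Lemma meet_complemented u v :
  complemented u -> complemented v -> complemented (meet u v).
Proof.
  intros Hu Hv. exists (join2 (compl u) (compl v)). split.
  - rewrite meet_join2_distr. apply le_bot_eq, join2_least.
    + rewrite <- (meet_compl_bot u). apply meet_mono; [apply meet_lb1 | apply le_refl].
    + rewrite <- (meet_compl_bot v). apply meet_mono; [apply meet_lb2 | apply le_refl].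
  - apply le_antisym; [apply top_max|].
    rewrite <- (join_compl_top _ Hv). apply join2_least.
    + apply le_trans with (meet v (join2 u (compl u))).
      { rewrite (join_compl_top _ Hu), meet_top. apply le_refl. }
      rewrite meet_join2_distr. apply join2_least.
      * rewrite meet_comm. apply join2_ub_l.
      * apply le_trans with (join2 (compl u) (compl v)); [|apply join2_ub_r].
        apply le_trans with (compl u); [apply meet_lb2 | apply join2_ub_l].
    + apply le_trans with (join2 (compl u) (compl v)); apply join2_ub_r.
Qed.

Lemma top_complemented : complemented (top : L).
Proof.
  exists bot. split.
  - apply le_bot_eq, meet_lb2.
  - apply le_antisym; [apply top_max | apply join2_ub_l].
Qed.

End FrameFacts.

Arguments join_compl_top {L u}.
Arguments compl_complemented {L u}.
Arguments meet_complemented {L u v}.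

Section BJsetFacts.
Variable L : Frame.
Variable F : BJset L.

Definition btop : B L := exist _ top top_complemented.

Definition bneg (b : B L) : B L :=
  exist _ (compl (proj1_sig b)) (compl_complemented (proj2_sig b)).

Definition bmeet (b c : B L) : B L :=
  exist _ (meet (proj1_sig b) (proj1_sig c))
    (meet_complemented (proj2_sig b) (proj2_sig c)).

Lemma equivb_refl b (x : F) : equivb F b x x.
Proof. apply bop_idem. Qed.

Lemma equivb_sym b (x y : F) : equivb F b x y -> equivb F b y x.
Proof.
  unfold equivb. intro Hxy. rewrite <- Hxy at 1. rewrite bop_left. apply bop_idem.
Qed.

Lemma equivb_trans b (x y z : F) :
  equivb F b x y -> equivb F b y z -> equivb F b x z.
Proof.
  unfold equivb. intros Hxy Hyz. rewrite <- Hyz at 2. rewrite <- Hxy, bop_left.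
  reflexivity.
Qed.

Lemma equivb_antitone (b c : B L) (x y : F) :
  le (proj1_sig c) (proj1_sig b) -> equivb F b x y -> equivb F c x y.
Proof.
  unfold equivb. intros Hcb Hxy.
  rewrite (bop_meet F c b c x y), Hxy by (symmetry; apply meet_absorb_le, Hcb).
  apply bop_idem.
Qed.

Lemma equivb_bop_l b (x y : F) : equivb F b (bop F b x y) x.
Proof. unfold equivb. rewrite bop_left. apply bop_idem. Qed.

Lemma equivb_bop_r b (x y : F) : equivb F (bneg b) (bop F b x y) y.
Proof.
  unfold equivb. rewrite (bop_neg F b (bneg b)) by reflexivity.
  rewrite bop_right. apply bop_idem.
Qed.

Lemma equivb_partition_eq (P : B L -> Prop) (x y : F) :
  partition P -> (forall i : { b | P b }, equivb F (proj1_sig i) x y) -> x = y.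
Proof.
  intros HP Hxy.
  pose proof (pop_bop F HP (fun _ => x) (fun _ => y)) as Hglue. simpl in Hglue.
  replace (fun i : { b | P b } => bop F (proj1_sig i) x y) with (fun _ : { b | P b } => y)
    in Hglue by (apply functional_extensionality; intro i; symmetry; apply Hxy).
  rewrite !(pop_const F HP) in Hglue. symmetry. exact Hglue.
Qed.

Lemma le_xhat b (x y : F) : equivb F b x y -> le (proj1_sig b) (xhat F x y).
Proof. intro Hxy. apply join_ub. eauto. Qed.

Lemma meet_xhat_le (x y : F) (u v : L) :
  (forall c, equivb F c x y -> le (meet (proj1_sig c) u) v) ->
  le (meet (xhat F x y) u) v.
Proof.
  intro Hc. rewrite meet_comm. unfold xhat. rewrite meet_join_distr.
  apply join_least. intros s [t [[c [<- Hcxy]] ->]]. rewrite meet_comm. auto.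
Qed.

Lemma xhat_diag (x : F) : xhat F x x = top.
Proof. apply le_antisym; [apply top_max | apply (le_xhat btop), equivb_refl]. Qed.

Lemma xhat_trans (x y z : F) : le (meet (xhat F x y) (xhat F y z)) (xhat F x z).
Proof.
  apply meet_xhat_le. intros c Hc. rewrite meet_comm. apply meet_xhat_le.
  intros d Hd. apply (le_xhat (bmeet d c)). apply equivb_trans with y.
  - apply (equivb_antitone c); [apply meet_lb2 | exact Hc].
  - apply (equivb_antitone d); [apply meet_lb1 | exact Hd].
Qed.

Lemma xhat_bop (x : F) b (y z : F) :
  xhat F x (bop F b y z) =
  join2 (meet (proj1_sig b) (xhat F x y)) (meet (compl (proj1_sig b)) (xhat F x z)).
Proof.
  set (v := bop F b y z). apply le_antisym.
  - rewrite <- (meet_top (xhat F x v)), <- (join_compl_top (proj2_sig b)).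
    rewrite meet_join2_distr. apply join2_mono; apply meet_glb; try apply meet_lb2.
    + apply le_trans with (meet (xhat F x v) (xhat F v y)); [|apply xhat_trans].
      apply meet_mono; [apply le_refl | apply le_xhat, equivb_bop_l].
    + apply le_trans with (meet (xhat F x v) (xhat F v z)); [|apply xhat_trans].
      apply meet_mono; [apply le_refl | apply (le_xhat (bneg b)), equivb_bop_r].
  - apply join2_least.
    + rewrite (meet_comm (proj1_sig b)).
      apply le_trans with (meet (xhat F x y) (xhat F y v)); [|apply xhat_trans].
      apply meet_mono; [apply le_refl | apply le_xhat, equivb_sym, equivb_bop_l].
    + rewrite (meet_comm (compl (proj1_sig b))).
      apply le_trans with (meet (xhat F x z) (xhat F z v)); [|apply xhat_trans].
      apply meet_mono; [apply le_refl | apply (le_xhat (bneg b)), equivb_sym, equivb_bop_r].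
Qed.

Lemma xhat_pop (x : F) (P : B L -> Prop) (xs : { b | P b } -> F) :
  partition P ->
  xhat F x (pop F P xs) =
  join (fun u => exists i : { b | P b },
           u = meet (proj1_sig (proj1_sig i)) (xhat F x (xs i))).
Proof.
  intro HP. pose proof (pop_proj F HP xs) as Hproj. apply le_antisym.
  - rewrite <- (meet_top (xhat F x (pop F P xs))).
    destruct HP as [_ [_ <-]]. rewrite meet_join_distr.
    apply join_least. intros s [t [[b [Pb <-]] ->]].
    set (i := exist P b Pb).
    apply le_trans with (meet (proj1_sig b) (xhat F x (xs i))).
    + apply meet_glb; [apply meet_lb2|].
      apply le_trans with (meet (xhat F x (pop F P xs)) (xhat F (pop F P xs) (xs i)));
        [|apply xhat_trans].
      apply meet_mono; [apply le_refl | apply le_xhat, (Hproj i)].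
    + apply join_ub. exists i. reflexivity.
  - apply join_least. intros s [i ->]. rewrite meet_comm.
    apply le_trans with (meet (xhat F x (xs i)) (xhat F (xs i) (pop F P xs)));
      [|apply xhat_trans].
    apply meet_mono; [apply le_refl | apply le_xhat, equivb_sym, Hproj].
Qed.

Lemma xhat_open (x : F) : is_open_E F (xhat F x).
Proof. split; intros; [apply xhat_bop | apply xhat_pop; assumption]. Qed.

Lemma xhat_eq_top (x y : F) : ultraparacompact L -> xhat F x y = top -> x = y.
Proof.
  intros [_ Hrefine] Htop.
  destruct (Hrefine _ Htop) as [P [HP HPrefines]].
  apply equivb_partition_eq with P; [exact HP|]. intros [b Pb]. simpl.
  destruct (HPrefines b Pb) as [c [[c' [<- Hc']] Hbc]].
  apply (equivb_antitone c'); assumption.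
Qed.

Lemma xhat_inj (x x' : F) : ultraparacompact L -> xhat F x = xhat F x' -> x = x'.
Proof.
  intros HL Hx. apply xhat_eq_top; [exact HL|].
  rewrite Hx. apply xhat_diag.
Qed.

Lemma open_E_meet_le (w : F -> L) b (x y : F) :
  is_open_E F w -> equivb F b x y -> le (meet (proj1_sig b) (w x)) (w y).
Proof.
  intros [Hbop _] Hxy. rewrite <- Hxy, Hbop. apply join2_ub_l.
Qed.

Lemma open_E_decomp (w : F -> L) (y : F) :
  is_open_E F w ->
  w y = join (fun u => exists x : F, u = meet (xhat F x y) (w x)).
Proof.
  intro Hw. apply le_antisym.
  - apply le_trans with (meet (xhat F y y) (w y)).
    + rewrite xhat_diag, meet_comm, meet_top. apply le_refl.
    + apply join_ub. eauto.
  - apply join_least. intros s [x ->]. apply meet_xhat_le.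
    intros c Hc. apply open_E_meet_le; assumption.
Qed.

End BJsetFacts.

Theorem lemma2p18 (L : Frame) (F : BJset L) :
  ultraparacompact L -> (bot : L) <> top ->
  (forall x : F, is_open_E F (xhat F x)) /\
  (forall x x' : F, xhat F x = xhat F x' -> x = x') /\
  (forall w : F -> L, is_open_E F w ->
     forall y : F, w y = join (fun u => exists x : F, u = meet (xhat F x y) (w x))).
Proof.
  intros HL _. split; [|split].
  - apply xhat_open.
  - intros x x'. apply xhat_inj, HL.
  - intros w Hw y. apply open_E_decomp, Hw.
Qed.
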